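(* Let $n\ge1$ and let $T\in\mathcal{L}(\mathcal{H})$ be $n$-EP. If $T$ is regular, then $T$ is invertible.
   Context: $\mathcal{H}$ is a Hilbert space, $\mathcal{L}(\mathcal{H})$ the bounded operators on it; $N(\cdot)$ and $R(\cdot)$ denote kernel and range. $T$ is regular if $T$ has closed range and $N(T)\subset R(T^k)$ for every integer $k\ge0$. For $T$ with closed range, $T^\dagger$ is its Moore–Penrose inverse (unique solution of $TT^\dagger T=T$, $T^\dagger TT^\dagger=T^\dagger$, $(T^\dagger T)^*=T^\dagger T$, $(TT^\dagger)^*=TT^\dagger$). $T$ is $n$-EP if it has closed range and $T^nT^\dagger=T^\dagger T^n$. *)

From mathcomp Require Import all_boot all_order all_algebra.
From mathcomp Require Import reals complex.
Set Implicit Arguments. Unset Strict Implicit. Unset Printing Implicit Defensive.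
Import Order.TTheory GRing.Theory Num.Theory.
Local Open Scope ring_scope.

Section Hilbert.
Variables (R : realType) (V : lmodType R[i]) (ip : V -> V -> R[i]).

Definition inner_product_axioms : Prop :=
  [/\ (forall (a : R[i]) (x y z : V), ip (a *: x + y) z = a * ip x z + ip y z),
      (forall x y : V, ip y x = (ip x y)^*),
      (forall x : V, 0 <= ip x x) &
      (forall x : V, ip x x = 0 -> x = 0)].

(* induced norm ||x|| = sqrt <x,x> (real part, <x,x> being real >= 0) *)
Definition hnorm (x : V) : R := Num.sqrt (complex.Re (ip x x)).

Definition hconverges (u : nat -> V) (v : V) : Prop :=
  forall e : R, 0 < e -> exists N : nat, forall k, (N <= k)%N -> hnorm (u k - v) < e.

Definition hcauchy (u : nat -> V) : Prop :=
  forall e : R, 0 < e -> exists N : nat,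
    forall k l, (N <= k)%N -> (N <= l)%N -> hnorm (u k - u l) < e.

Definition is_hilbert : Prop :=
  inner_product_axioms /\ (forall u, hcauchy u -> exists v, hconverges u v).

Definition bounded_op (T : V -> V) : Prop :=
  (forall (a : R[i]) (x y : V), T (a *: x + y) = a *: T x + T y) /\
  exists M : R, forall x, hnorm (T x) <= M * hnorm x.

Definition op_kernel (T : V -> V) (x : V) : Prop := T x = 0.
Definition op_range (T : V -> V) (y : V) : Prop := exists x, y = T x.

Definition closed_range (T : V -> V) : Prop :=
  forall (u : nat -> V) (y : V),
    (forall k, op_range T (u k)) -> hconverges u y -> op_range T y.

Definition op_pow (T : V -> V) (k : nat) : V -> V := fun x => iter k T x.

Definition regular (T : V -> V) : Prop :=
  closed_range T /\
  forall (k : nat) (x : V), op_kernel T x -> op_range (op_pow T k) x.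

(* A* = A, expressed through the inner product *)
Definition selfadjoint (A : V -> V) : Prop :=
  forall x y, ip (A x) y = ip x (A y).

Definition moore_penrose (T S : V -> V) : Prop :=
  [/\ bounded_op S,
      (forall x, T (S (T x)) = T x),
      (forall x, S (T (S x)) = S x),
      selfadjoint (fun x => S (T x)) &
      selfadjoint (fun x => T (S x))].

Definition n_EP (n : nat) (T : V -> V) : Prop :=
  closed_range T /\
  exists S, moore_penrose T S /\
    forall x, op_pow T n (S x) = S (op_pow T n x).

Definition invertible_op (T : V -> V) : Prop :=
  exists S, bounded_op S /\ (forall x, S (T x) = x) /\ (forall x, T (S x) = x).

End Hilbert.

(** The argument is purely algebraic: of the hypotheses only [T T^† T = T],
    [T^n T^† = T^† T^n] (with [n >= 1]) and [N(T) ⊂ R(T^n)] are used.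
    If [T x = 0] then [x = T^n y], and
    [T^† T^(n+1) y = T^n T^† T y = T^(n-1) (T T^† T) y = T^n y], so
    [x = T^† T x = 0]: [T] is injective, hence [T^† T = 1].  For any [z] the
    vector [w = z - T T^† z] satisfies [T^† w = 0], so
    [T^(n-1) w = T^† T^n w = T^n T^† w = 0] and [w = 0]: [T T^† = 1]. *)
From HB Require Import structures.
From mathcomp Require Import all_boot all_order all_algebra.
From mathcomp Require Import reals complex.
Set Implicit Arguments.
Unset Strict Implicit.
Unset Printing Implicit Defensive.
Import GRing.Theory.
Local Open Scope ring_scope.

Lemma iter_inj (X : Type) (f : X -> X) (k : nat) :
  injective f -> injective (iter k f).
Proof. by move=> injf; elim: k => //= k IHk x y /injf /IHk. Qed.

Section CommutingGeneralizedInverse.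

Variables (V : zmodType) (T S : {additive V -> V}) (n : nat).
Hypothesis TST : forall x, T (S (T x)) = T x.
Hypothesis iterT_S : forall x, iter n.+1 T (S x) = S (iter n.+1 T x).

Lemma ker_sub_range_iter_inj :
  (forall x, T x = 0 -> exists y, x = iter n.+1 T y) -> injective T.
Proof.
move=> kerT; apply: raddf_inj => x Tx0; have [y def_x] := kerT x Tx0.
have STx : S (T x) = x.
  by rewrite def_x -iterS iterSr -iterT_S iterSr TST -iterSr.
by rewrite -STx Tx0 raddf0.
Qed.

Hypothesis injT : injective T.

Lemma inj_ginvK : cancel T S.
Proof. by move=> x; apply: injT; rewrite TST. Qed.

Lemma inj_ginvVK : cancel S T.
Proof.
move=> z; set w := z - T (S z).
have Sw0 : S w = 0 by rewrite raddfB inj_ginvK subrr.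
have iterTw0 : iter n T w = 0.
  by rewrite -[LHS]inj_ginvK -iterS -iterT_S Sw0 iter_fix // raddf0.
have w0 : w = 0.
  by apply: (iter_inj (k := n) injT); rewrite iterTw0 iter_fix // raddf0.
by apply/esym/subr0_eq.
Qed.

End CommutingGeneralizedInverse.

Lemma bounded_op_zmod_morphism (R : realType) (V : lmodType R[i])
    (ip : V -> V -> R[i]) (f : V -> V) :
  bounded_op ip f -> GRing.zmod_morphism f.
Proof.
by move=> [linf _] x y; rewrite -scaleN1r addrC linf scaleN1r addrC.
Qed.

Theorem mainTheorem20 (R : realType) (V : lmodType R[i]) (ip : V -> V -> R[i])
  (HV : is_hilbert ip) (n : nat) (T : V -> V) :
  (1 <= n)%N -> bounded_op ip T -> n_EP ip n T -> regular ip T ->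
  invertible_op ip T.
Proof.
case: n => [//|n] _ boundedT [_ [S [[boundedS TST _ _ _] iterT_S]]] [_ kerT].
pose Ta : {additive V -> V} :=
  HB.pack T (GRing.isZmodMorphism.Build _ _ T (bounded_op_zmod_morphism boundedT)).
pose Sa : {additive V -> V} :=
  HB.pack S (GRing.isZmodMorphism.Build _ _ S (bounded_op_zmod_morphism boundedS)).
have injT : injective T := ker_sub_range_iter_inj (T := Ta) (S := Sa) TST iterT_S (kerT n.+1).
exists S; split; first exact: boundedS.
split; first exact: (inj_ginvK (T := Ta) (S := Sa) TST injT).
exact: (inj_ginvVK (T := Ta) (S := Sa) TST iterT_S injT).
Qed.
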